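(* Let $L$ be the free nilpotent Lie algebra of index $4$ on $X$, i.e. the free Lie algebra on $X$ modulo the ideal spanned by all Lie monomials of degree $\ge 4$ (equivalently, the free Lie algebra in the variety defined by $[[[a,b],c],d]=0$). Then the Lie algebra homomorphism $L\to \mathcal{A}s_3\langle X\rangle^{(-)}$ which is the identity on $X$ is injective; that is, $L$ embeds into the free third-type associative algebra $\mathcal{A}s_3\langle X\rangle$ equipped with the commutator $[a,b]=ab-ba$.
   Context: An associative algebra is called of the third type if it satisfies $abc+bac-bca-cba=0$ for all $a,b,c$. $\mathcal{A}s_3\langle X\rangle$ is the free such algebra on a countable set $X$ over a field of characteristic $0$, and $\mathcal{A}s_3\langle X\rangle^{(-)}$ denotes the same vector space with product $[a,b]=ab-ba$, which is a Lie algebra. *)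

From mathcomp Require Import all_boot all_algebra.
Set Implicit Arguments. Unset Strict Implicit. Unset Printing Implicit Defensive.
Import GRing.Theory.
Local Open Scope ring_scope.

(* Formal expressions of a (non-unital, non-associative) algebra over F on the
   countable set of generators X = nat, with one bilinear product Mul.
   A variety of algebras is given by a relation R of defining identities
   (already closed under substitution, since its constructors quantify over
   all expressions); the relatively free algebra of the variety on X is
   expr F modulo the congruence [alg_congr R] below (vector space axioms,
   bilinearity of Mul, compatibility with all operations, and R). *)
Inductive expr (F : Type) : Type :=
| Var of nat
| Zero
| Add of expr F & expr F
| Scale of F & expr F
| Mul of expr F & expr F.
Arguments Zero {F}.

Inductive alg_congr (F : fieldType) (R : expr F -> expr F -> Prop) :
  expr F -> expr F -> Prop :=
| ac_rel x y : R x y -> alg_congr R x y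
| ac_refl x : alg_congr R x x
| ac_sym x y : alg_congr R x y -> alg_congr R y x
| ac_trans x y z : alg_congr R x y -> alg_congr R y z -> alg_congr R x z
| ac_Add x x' y y' : alg_congr R x x' -> alg_congr R y y' ->
    alg_congr R (Add x y) (Add x' y')
| ac_Scale c x x' : alg_congr R x x' -> alg_congr R (Scale c x) (Scale c x')
| ac_Mul x x' y y' : alg_congr R x x' -> alg_congr R y y' ->
    alg_congr R (Mul x y) (Mul x' y')
| ac_addA x y z : alg_congr R (Add x (Add y z)) (Add (Add x y) z)
| ac_addC x y : alg_congr R (Add x y) (Add y x)
| ac_add0 x : alg_congr R (Add x Zero) x
| ac_addN x : alg_congr R (Add x (Scale (-1) x)) Zero
| ac_scale1 x : alg_congr R (Scale 1 x) x
| ac_scaleA c d x : alg_congr R (Scale c (Scale d x)) (Scale (c * d) x)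
| ac_scaleDr c x y : alg_congr R (Scale c (Add x y)) (Add (Scale c x) (Scale c y))
| ac_scaleDl c d x : alg_congr R (Scale (c + d) x) (Add (Scale c x) (Scale d x))
| ac_mulDl x y z : alg_congr R (Mul (Add x y) z) (Add (Mul x z) (Mul y z))
| ac_mulDr x y z : alg_congr R (Mul x (Add y z)) (Add (Mul x y) (Mul x z))
| ac_mulZl c x y : alg_congr R (Mul (Scale c x) y) (Scale c (Mul x y))
| ac_mulZr c x y : alg_congr R (Mul x (Scale c y)) (Scale c (Mul x y)).

Inductive lie_nil4_rel (F : fieldType) : expr F -> expr F -> Prop :=
| lr_alt x : lie_nil4_rel (Mul x x) Zero
| lr_jacobi x y z :
    lie_nil4_rel (Add (Add (Mul (Mul x y) z) (Mul (Mul y z) x)) (Mul (Mul z x) y)) Zero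
| lr_nil4 x y z w : lie_nil4_rel (Mul (Mul (Mul x y) z) w) Zero.

Inductive as3_rel (F : fieldType) : expr F -> expr F -> Prop :=
| ar_assoc x y z : as3_rel (Mul (Mul x y) z) (Mul x (Mul y z))
| ar_third a b c :
    as3_rel (Add (Add (Add (Mul (Mul a b) c) (Mul (Mul b a) c))
                      (Scale (-1) (Mul (Mul b c) a)))
                 (Scale (-1) (Mul (Mul c b) a))) Zero.

Definition lie4_eq (F : fieldType) := alg_congr (@lie_nil4_rel F).
Definition as3_eq (F : fieldType) := alg_congr (@as3_rel F).

Fixpoint lie_to_as (F : fieldType) (e : expr F) : expr F :=
  match e with
  | Var n => Var F n
  | Zero => Zero
  | Add a b => Add (lie_to_as a) (lie_to_as b)
  | Scale c a => Scale c (lie_to_as a)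
  | Mul a b => Add (Mul (lie_to_as a) (lie_to_as b))
                   (Scale (-1) (Mul (lie_to_as b) (lie_to_as a)))
  end.

(* Interpret As_3<X> in L: an element is sent to its degree-1 part, to the
   bracket [a,b] of each of its quadratic monomials ab, to the operator
   w |-> [[w,a],b] recording how such a monomial multiplies on the left, and
   to the bracket [[a,b],c] of each cubic monomial abc. Both associativity and
   abc + bac - bca - cba = 0 hold in this interpretation, and monomials of
   degree >= 4 vanish. On the image of a Lie element e the three parts are
   e_1, 2 e_2 and 3 e_3, where e_k is the degree-k component of e, so e is
   recovered as deg1 + deg2/2 + deg3/3 once 2 and 3 are invertible. *)

From mathcomp Require Import all_boot all_algebra.
From Stdlib Require Import Setoid Morphisms.
From mathcomp Require Import ring.
Set Implicit Arguments. Unset Strict Implicit. Unset Printing Implicit Defensive.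
Import GRing.Theory.
Local Open Scope ring_scope.

#[global] Instance alg_congr_Equivalence (F : fieldType) (R : expr F -> expr F -> Prop) :
  Equivalence (alg_congr R).
Proof. split; [exact: ac_refl | exact: ac_sym | exact: ac_trans]. Qed.

#[global] Instance Add_Proper (F : fieldType) (R : expr F -> expr F -> Prop) :
  Proper (alg_congr R ==> alg_congr R ==> alg_congr R) (@Add F).
Proof. by move=> ? ? ? ? ? ?; apply: ac_Add. Qed.

#[global] Instance Scale_Proper (F : fieldType) (R : expr F -> expr F -> Prop) c :
  Proper (alg_congr R ==> alg_congr R) (@Scale F c).
Proof. by move=> ? ? ?; apply: ac_Scale. Qed.

#[global] Instance Mul_Proper (F : fieldType) (R : expr F -> expr F -> Prop) :
  Proper (alg_congr R ==> alg_congr R ==> alg_congr R) (@Mul F).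
Proof. by move=> ? ? ? ? ? ?; apply: ac_Mul. Qed.

#[global] Hint Resolve ac_refl : core.

Section AlgCongr.

Variables (F : fieldType) (R : expr F -> expr F -> Prop).
Local Notation "x ~ y" := (alg_congr R x y) (at level 70).
Implicit Types (x y z t : expr F) (a b c : F).

Lemma ac_add0l x : Add Zero x ~ x.
Proof. by rewrite ac_addC ac_add0. Qed.

Lemma ac_addNl x : Add (Scale (-1) x) x ~ Zero.
Proof. by rewrite ac_addC ac_addN. Qed.

Lemma ac_scale0l x : Scale 0 x ~ Zero.
Proof. by rewrite -(addrN 1) ac_scaleDl ac_scale1 ac_addN. Qed.

Lemma ac_scale0r c : Scale c (@Zero F) ~ Zero.
Proof. by rewrite -{1}(ac_scale0l Zero) ac_scaleA mulr0 ac_scale0l. Qed.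

Lemma ac_mul0l x : Mul Zero x ~ Zero.
Proof. by rewrite -{1}(ac_scale0l Zero) ac_mulZl ac_scale0l. Qed.

Lemma ac_mul0r x : Mul x Zero ~ Zero.
Proof. by rewrite -{1}(ac_scale0l Zero) ac_mulZr ac_scale0l. Qed.

Lemma ac_addACA x y z t : Add (Add x y) (Add z t) ~ Add (Add x z) (Add y t).
Proof. by rewrite -!ac_addA (ac_addA R y z t) (ac_addC R y z) -ac_addA. Qed.

Lemma ac_addr0_eq x y : Add x y ~ Zero -> y ~ Scale (-1) x.
Proof. by move=> xy0; rewrite -(ac_add0l y) -(ac_addNl x) -ac_addA xy0 ac_add0. Qed.

Definition comb3 (P Q S : expr F) a b c :=
  Add (Add (Scale a P) (Scale b Q)) (Scale c S).

Lemma comb3_Add P Q S x y a b c a' b' c' :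
  x ~ comb3 P Q S a b c -> y ~ comb3 P Q S a' b' c' ->
  Add x y ~ comb3 P Q S (a + a') (b + b') (c + c').
Proof.
move=> -> ->; rewrite /comb3 !ac_scaleDl.
by rewrite (ac_addACA (Add (Scale a P) (Scale b Q))) (ac_addACA (Scale a P)).
Qed.

Lemma comb3_Scale P Q S x k a b c :
  x ~ comb3 P Q S a b c -> Scale k x ~ comb3 P Q S (k * a) (k * b) (k * c).
Proof. by move=> ->; rewrite /comb3 !ac_scaleDr !ac_scaleA. Qed.

Lemma comb3_Zero P Q S x : x ~ Zero -> x ~ comb3 P Q S 0 0 0.
Proof. by move=> ->; rewrite /comb3 !ac_scale0l !ac_add0. Qed.

Lemma comb3_1 P Q S x : x ~ P -> x ~ comb3 P Q S 1 0 0.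
Proof. by move=> ->; rewrite /comb3 !ac_scale0l !ac_add0 ac_scale1. Qed.

Lemma comb3_2 P Q S x : x ~ Q -> x ~ comb3 P Q S 0 1 0.
Proof. by move=> ->; rewrite /comb3 !ac_scale0l ac_add0 ac_add0l ac_scale1. Qed.

Lemma comb3_3 P Q S x : x ~ S -> x ~ comb3 P Q S 0 0 1.
Proof. by move=> ->; rewrite /comb3 !ac_scale0l ac_add0 ac_add0l ac_scale1. Qed.

Lemma comb3_eq P Q S x y a b c a' b' c' :
  x ~ comb3 P Q S a b c -> y ~ comb3 P Q S a' b' c' ->
  a = a' -> b = b' -> c = c' -> x ~ y.
Proof. by move=> -> -> -> -> ->. Qed.

End AlgCongr.

Ltac comb3_expand := first
  [ eapply comb3_Add; comb3_expand
  | eapply comb3_Scale; comb3_expand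
  | apply: comb3_Zero; reflexivity
  | apply: comb3_1; reflexivity
  | apply: comb3_2; reflexivity
  | apply: comb3_3; reflexivity ].

(* Proves [x ~ y] for linear combinations [x], [y] of [P], [Q], [S] and
   zeroes, leaving the three equalities of coefficients. *)
Ltac lin_comb P Q S := eapply (@comb3_eq _ _ P Q S); [comb3_expand | comb3_expand | ..].

Local Notation "x ≃ y" := (alg_congr (@lie_nil4_rel _) x y) (at level 70).

Section NilpotentLie.

Variable F : fieldType.
Implicit Types (x y z w e f : expr F) (c : F).

Lemma lie_anticomm x y : Mul y x ≃ Scale (-1) (Mul x y).
Proof.
apply: ac_addr0_eq; rewrite -(ac_rel (lr_alt (Add x y))).
rewrite ac_mulDl !ac_mulDr (ac_rel (lr_alt x)) (ac_rel (lr_alt y)).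
by lin_comb (Mul x y) (Mul y x) (@Zero F); ring.
Qed.

Lemma lie_leibniz y x z :
  Add (Mul (Mul y x) z) (Scale (-1) (Mul (Mul y z) x)) ≃ Mul y (Mul x z).
Proof.
have jacobi := ac_rel (lr_jacobi y x z).
rewrite (lie_anticomm y (Mul x z)) (lie_anticomm y z) ac_mulZl in jacobi.
transitivity (Add (Add (Add (Mul (Mul y x) z) (Scale (-1) (Mul y (Mul x z))))
   (Scale (-1) (Mul (Mul y z) x))) (Mul y (Mul x z))).
  by lin_comb (Mul (Mul y x) z) (Mul (Mul y z) x) (Mul y (Mul x z)); ring.
by rewrite jacobi ac_add0l.
Qed.

Definition central e := forall y, Mul e y ≃ Zero.
Definition central2 e := forall y z, Mul (Mul e y) z ≃ Zero.
Definition centralizes_Z2 f := forall e, central2 e -> Mul e f ≃ Zero.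

Lemma central_eq e e' : e ≃ e' -> central e -> central e'.
Proof. by move=> ee' ce y; rewrite -ee'. Qed.

Lemma central0 : central Zero.
Proof. exact: ac_mul0l. Qed.

Lemma centralD e e' : central e -> central e' -> central (Add e e').
Proof. by move=> ce ce' y; rewrite ac_mulDl ce ce' ac_add0. Qed.

Lemma centralZ c e : central e -> central (Scale c e).
Proof. by move=> ce y; rewrite ac_mulZl ce ac_scale0r. Qed.

Lemma central_mulr e y : central e -> Mul y e ≃ Zero.
Proof. by move=> ce; rewrite lie_anticomm ce ac_scale0r. Qed.

Lemma central_bracketl e y : central2 e -> central (Mul e y).
Proof. by move=> ce z; apply: ce. Qed.

Lemma central_bracketr e y : central2 e -> central (Mul y e).
Proof. by move=> ce z; rewrite (lie_anticomm e y) ac_mulZl ce ac_scale0r. Qed.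

Lemma central2_0 : central2 Zero.
Proof. by move=> y z; rewrite !ac_mul0l. Qed.

Lemma central2D e e' : central2 e -> central2 e' -> central2 (Add e e').
Proof. by move=> ce ce' y z; rewrite !ac_mulDl ce ce' ac_add0. Qed.

Lemma central2Z c e : central2 e -> central2 (Scale c e).
Proof. by move=> ce y z; rewrite !ac_mulZl ce ac_scale0r. Qed.

Lemma central2_bracket x y : central2 (Mul x y).
Proof. by move=> z w; apply: ac_rel; apply: lr_nil4. Qed.

Lemma centralizes_Z2_0 : centralizes_Z2 Zero.
Proof. by move=> e _; apply: ac_mul0r. Qed.

Lemma centralizes_Z2D f f' :
  centralizes_Z2 f -> centralizes_Z2 f' -> centralizes_Z2 (Add f f').
Proof. by move=> cf cf' e ce; rewrite ac_mulDr cf // cf' // ac_add0. Qed.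

Lemma centralizes_Z2Z c f : centralizes_Z2 f -> centralizes_Z2 (Scale c f).
Proof. by move=> cf e ce; rewrite ac_mulZr cf // ac_scale0r. Qed.

Lemma centralizes_Z2_bracket x y : centralizes_Z2 (Mul x y).
Proof.
move=> e ce; have jacobi := ac_rel (lr_jacobi x y e).
rewrite (ce x y) ac_add0 (lie_anticomm e y) ac_mulZl (ce y x) ac_scale0r ac_add0 in jacobi.
by rewrite lie_anticomm jacobi ac_scale0r.
Qed.

End NilpotentLie.

Section As3Model.

Variable F : fieldType.
Implicit Types (x y z w : expr F) (c d : F).

Record model := Model { deg1 : expr F; deg2 : expr F; act : expr F -> expr F; deg3 : expr F }.
Implicit Types (u v : model).

Definition model_add u v :=
  Model (Add (deg1 u) (deg1 v)) (Add (deg2 u) (deg2 v))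
        (fun w => Add (act u w) (act v w)) (Add (deg3 u) (deg3 v)).

Definition model_scale c u :=
  Model (Scale c (deg1 u)) (Scale c (deg2 u)) (fun w => Scale c (act u w)) (Scale c (deg3 u)).

(* In degree 3, a * (bc) contributes act_(bc) a = [[a,b],c] and (ab) * c
   contributes [[a,b],c]. *)
Definition model_mul u v :=
  Model Zero (Mul (deg1 u) (deg1 v)) (fun w => Mul (Mul w (deg1 u)) (deg1 v))
        (Add (act v (deg1 u)) (Mul (deg2 u) (deg1 v))).

Fixpoint as3_model e : model :=
  match e with
  | Var n => Model (Var F n) Zero (fun=> Zero) Zero
  | Zero => Model Zero Zero (fun=> Zero) Zero
  | Add x y => model_add (as3_model x) (as3_model y)
  | Scale c x => model_scale c (as3_model x)
  | Mul x y => model_mul (as3_model x) (as3_model y)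
  end.

Definition model_eq u v :=
  [/\ deg1 u ≃ deg1 v, deg2 u ≃ deg2 v, deg3 u ≃ deg3 v & forall w, act u w ≃ act v w].

Definition linear_act u :=
  [/\ forall y y', y ≃ y' -> act u y ≃ act u y',
      forall y z, act u (Add y z) ≃ Add (act u y) (act u z) &
      forall c y, act u (Scale c y) ≃ Scale c (act u y)].

Lemma linear_act_model x : linear_act (as3_model x).
Proof.
elim: x => [n| |x [px ax sx] y [py ay sy]|c x [px ax sx]|x _ y _] /=.
- by split=> *; rewrite ?ac_add0 ?ac_scale0r.
- by split=> *; rewrite ?ac_add0 ?ac_scale0r.
- split=> [y0 y0' e|y0 z|c y0] /=; first by rewrite (px _ _ e) (py _ _ e).
    by rewrite ax ay ac_addACA.
  by rewrite sx sy ac_scaleDr.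
- split=> [y0 y0' e|y0 z|d y0] /=; first by rewrite (px _ _ e).
    by rewrite ax ac_scaleDr.
  by rewrite sx !ac_scaleA mulrC.
- split=> [y0 y0' e|y0 z|d y0] /=; first by rewrite e.
    by rewrite !ac_mulDl.
  by rewrite !ac_mulZl.
Qed.

Lemma linear_act0 u : linear_act u -> act u Zero ≃ Zero.
Proof.
case=> p _ s; rewrite (p Zero (Scale 0 Zero)); last by rewrite ac_scale0l.
by rewrite s ac_scale0l.
Qed.

Lemma model_mul_eq u u' v v' : linear_act v ->
  model_eq u u' -> model_eq v v' -> model_eq (model_mul u v) (model_mul u' v').
Proof.
move=> [pv _ _] [eu1 eu2 _ _] [ev1 ev2 _ ev]; split=> /= [//| | |w].
- by rewrite eu1 ev1.
- by rewrite (pv _ _ eu1) ev eu2 ev1.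
- by rewrite eu1 ev1.
Qed.

Lemma model_eq_as3_rel x y : as3_rel x y -> model_eq (as3_model x) (as3_model y).
Proof.
case=> {x y} [x y z|a b c]; split=> /= [|||w];
  repeat progress rewrite ?ac_mul0l ?ac_mul0r ?ac_scale0r ?ac_add0 ?ac_add0l => //.
- by rewrite (linear_act0 (linear_act_model z)) ac_add0l.
- rewrite (linear_act0 (linear_act_model a)) (linear_act0 (linear_act_model c)) !ac_add0l.
  set A := deg1 (as3_model a); set B := deg1 (as3_model b); set C := deg1 (as3_model c).
  rewrite (lie_anticomm A B) (lie_anticomm B C) !ac_mulZl.
  by lin_comb (Mul (Mul A B) C) (Mul (Mul B C) A) (@Zero F); ring.
Qed.

Lemma as3_model_sound x y : as3_eq x y -> model_eq (as3_model x) (as3_model y).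
Proof.
elim=> {x y}.
- exact: model_eq_as3_rel.
- by move=> x; split.
- by move=> x y _ [e1 e2 e3 e]; split=> [||| w]; rewrite ?e1 ?e2 ?e3 ?e.
- move=> x y z _ [exy1 exy2 exy3 exy] _ [eyz1 eyz2 eyz3 eyz].
  by split=> [||| w]; [rewrite exy1 | rewrite exy2 | rewrite exy3 | rewrite exy].
- move=> x x' y y' _ [ex1 ex2 ex3 ex] _ [ey1 ey2 ey3 ey].
  by split=> /= [||| w]; [rewrite ex1 ey1 | rewrite ex2 ey2 | rewrite ex3 ey3 | rewrite ex ey].
- move=> c x x' _ [ex1 ex2 ex3 ex].
  by split=> /= [||| w]; [rewrite ex1 | rewrite ex2 | rewrite ex3 | rewrite ex].
- by move=> x x' y y' _ ex _ ey; apply: model_mul_eq => //; apply: linear_act_model.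
- by move=> *; split=> /= *; apply: ac_addA.
- by move=> *; split=> /= *; apply: ac_addC.
- by move=> *; split=> /= *; apply: ac_add0.
- by move=> *; split=> /= *; apply: ac_addN.
- by move=> *; split=> /= *; apply: ac_scale1.
- by move=> *; split=> /= *; apply: ac_scaleA.
- by move=> *; split=> /= *; apply: ac_scaleDr.
- by move=> *; split=> /= *; apply: ac_scaleDl.
- move=> x y z; have [_ az _] := linear_act_model z.
  split=> /= [|||w]; first by rewrite ac_add0.
  + exact: ac_mulDl.
  + by rewrite az ac_mulDl ac_addACA.
  + by rewrite ac_mulDr ac_mulDl.
- move=> x y z; split=> /= [|||w]; first by rewrite ac_add0.
  + exact: ac_mulDr.
  + by rewrite ac_mulDr ac_addACA.
  + exact: ac_mulDr.
- move=> c x y; have [_ _ sy] := linear_act_model y.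
  split=> /= [|||w]; first by rewrite ac_scale0r.
  + exact: ac_mulZl.
  + by rewrite sy ac_mulZl ac_scaleDr.
  + by rewrite ac_mulZr ac_mulZl.
- move=> c x y; split=> /= [|||w]; first by rewrite ac_scale0r.
  + exact: ac_mulZr.
  + by rewrite ac_mulZr ac_scaleDr.
  + exact: ac_mulZr.
Qed.

End As3Model.

Section LieImage.

Variables (F : fieldType) (two_neq0 : 2 != 0 :> F) (three_neq0 : 3 != 0 :> F).
Implicit Types (a b w : expr F) (u v : model F).

Definition model_bracket u v :=
  model_add (model_mul u v) (model_scale (-1) (model_mul v u)).

(* The last three conditions are what is used of deg2 lying in [L,L] and of
   deg3 lying in [[L,L],L]. *)
Definition lie_shaped u :=
  [/\ forall w, act u w ≃ Scale 2^-1 (Mul w (deg2 u)), central2 (deg2 u),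
      centralizes_Z2 (deg2 u) & central (deg3 u)].

Definition recover u := Add (Add (deg1 u) (Scale 2^-1 (deg2 u))) (Scale 3^-1 (deg3 u)).

Lemma lie_shaped_bracket u v : lie_shaped u -> lie_shaped v -> lie_shaped (model_bracket u v).
Proof.
move=> [actU c2U _ _] [actV c2V _ _].
split=> /=; set U1 := deg1 u; set V1 := deg1 v.
- move=> w; rewrite lie_leibniz ac_mulDr ac_mulZr (lie_anticomm U1 V1) ac_mulZr.
  by lin_comb (Mul w (Mul U1 V1)) U1 V1; field; exact: two_neq0.
- by apply: central2D; [|apply: central2Z]; apply: central2_bracket.
- by apply: centralizes_Z2D; [|apply: centralizes_Z2Z]; apply: centralizes_Z2_bracket.
- apply: centralD; last apply: centralZ; apply: centralD.
  + apply: (@central_eq _ (Scale 2^-1 (Mul U1 (deg2 v)))); first by rewrite actV.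
    exact/centralZ/central_bracketr.
  + exact: central_bracketl.
  + apply: (@central_eq _ (Scale 2^-1 (Mul V1 (deg2 u)))); first by rewrite actU.
    exact/centralZ/central_bracketr.
  + exact: central_bracketl.
Qed.

Lemma recover_bracket u v : lie_shaped u -> lie_shaped v ->
  Mul (recover u) (recover v) ≃ recover (model_bracket u v).
Proof.
move=> [actU c2U _ c3U] [actV _ cZV c3V].
rewrite /recover /= actU actV !ac_mulDl !ac_mulDr !ac_mulZl !ac_mulZr.
rewrite !c3U !(central_mulr _ c3V) (cZV _ c2U).
set U1 := deg1 u; set V1 := deg1 v; set U2 := deg2 u; set V2 := deg2 v.
rewrite (lie_anticomm U1 V1) (lie_anticomm U2 V1) (lie_anticomm U1 V2).
by lin_comb (Mul U1 V1) (Mul U1 V2) (Mul U2 V1); field;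
  rewrite ?two_neq0 ?three_neq0.
Qed.

Lemma lie_shaped_deg1 a : lie_shaped (Model a Zero (fun=> Zero) Zero).
Proof.
split=> [w|||] /=; first by rewrite ac_mul0r ac_scale0r.
- exact: central2_0.
- exact: centralizes_Z2_0.
- exact: central0.
Qed.

Lemma lie_shaped_add u v : lie_shaped u -> lie_shaped v -> lie_shaped (model_add u v).
Proof.
move=> [actU c2U cZU c3U] [actV c2V cZV c3V]; split=> [w|||] /=.
- by rewrite actU actV ac_mulDr ac_scaleDr.
- exact: central2D.
- exact: centralizes_Z2D.
- exact: centralD.
Qed.

Lemma lie_shaped_scale c u : lie_shaped u -> lie_shaped (model_scale c u).
Proof.
move=> [actU c2U cZU c3U]; split=> [w|||] /=.
- by rewrite actU ac_mulZr !ac_scaleA mulrC.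
- exact: central2Z.
- exact: centralizes_Z2Z.
- exact: centralZ.
Qed.

Lemma lie_shaped_lie_to_as a : lie_shaped (as3_model (lie_to_as a)).
Proof.
elim: a => [n| |a sa b sb|c a sa|a sa b sb] /=.
- exact: lie_shaped_deg1.
- exact: lie_shaped_deg1.
- exact: lie_shaped_add.
- exact: lie_shaped_scale.
- exact: lie_shaped_bracket.
Qed.

Lemma lie_to_as_recover a : a ≃ recover (as3_model (lie_to_as a)).
Proof.
elim: a => [n| |a ea b eb|c a ea|a ea b eb] /=.
- by rewrite /recover /= !ac_scale0r !ac_add0.
- by rewrite /recover /= !ac_scale0r !ac_add0.
- rewrite {1}ea {1}eb /recover /= !ac_scaleDr.
  by rewrite (ac_addACA _ (deg1 _)) ac_addACA.
- rewrite {1}ea /recover /= !ac_scaleA (mulrC 2^-1) (mulrC 3^-1) -!ac_scaleA.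
  by rewrite -!ac_scaleDr.
- rewrite {1}ea {1}eb; apply: recover_bracket; exact: lie_shaped_lie_to_as.
Qed.

Lemma recover_eq u v : model_eq u v -> recover u ≃ recover v.
Proof. by case=> e1 e2 e3 _; rewrite /recover e1 e2 e3. Qed.

End LieImage.

Theorem mainTheorem7 (F : fieldType) (charF0 : [pchar F] =i pred0)
  (a b : expr F) :
  as3_eq (lie_to_as a) (lie_to_as b) -> lie4_eq a b.
Proof.
move=> eq_ab.
have [two_neq0 three_neq0] : 2 != 0 :> F /\ 3 != 0 :> F.
  by have := charF0 2; have := charF0 3; rewrite !inE /= => -> ->.
rewrite /lie4_eq (lie_to_as_recover two_neq0 three_neq0 a).
rewrite (lie_to_as_recover two_neq0 three_neq0 b).
exact/recover_eq/as3_model_sound.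
Qed.
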